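(* Let $X$ be a $T_1$ space and $\mathcal{P}$ an ideal of closed subsets of $X$. Let $\mathcal{P}'$ be the ideal of all closed subsets of $X$ contained in the set of isolated points of $X$. Then $C(X)_\mathcal{P}=C(X)$ if and only if $\mathcal{P}\subseteq\mathcal{P}'$.
   Context: An ideal of closed subsets of $X$ is a family $\mathcal{P}$ of closed subsets closed under finite unions and under passing to closed subsets. $D_f$ is the set of discontinuity points of $f\in\mathbb{R}^X$; $C(X)_\mathcal{P}=\{f\in\mathbb{R}^X\colon\overline{D_f}\in\mathcal{P}\}$; $C(X)$ is the ring of continuous real-valued functions on $X$. *)

From HB Require Import structures.
From mathcomp Require Import all_boot all_order all_algebra.
From mathcomp Require Import all_classical all_reals all_analysis.
Set Implicit Arguments. Unset Strict Implicit. Unset Printing Implicit Defensive.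
Import Order.TTheory GRing.Theory Num.Theory.
Import numFieldNormedType.Exports.
Local Open Scope classical_set_scope.

Definition closed_ideal (X : topologicalType) (P : set (set X)) : Prop :=
  [/\ P !=set0,
      (forall A, P A -> closed A),
      (forall A B, P A -> P B -> P (A `|` B)) &
      (forall A B, P A -> closed B -> B `<=` A -> P B)].

Definition discont (X : topologicalType) (R : realType) (f : X -> R) : set X :=
  [set x : X | ~ {for x, continuous (f : X -> R^o)}].

Definition CP (X : topologicalType) (R : realType) (P : set (set X)) : set (X -> R) :=
  [set f | P (closure (discont f))].

Definition CX (X : topologicalType) (R : realType) : set (X -> R) :=
  [set f | continuous f].

Definition Pisol (X : topologicalType) : set (set X) :=
  [set A | closed A /\ A `<=` isolated [set: X]].

(* Every function is continuous at an isolated point, so when every member of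
   the ideal consists of isolated points, a function whose discontinuity set
   has closure in the ideal has no discontinuity at all.  Conversely, in a T1
   space the indicator of a point x is continuous off x, since [set x] is
   closed, and continuous at x only if x is isolated (pull back the open set
   of nonzero reals).  If x lies in a member of the ideal, that indicator
   belongs to C(X)_P, so C(X)_P = C(X) forces x to be isolated. *)

From mathcomp Require Import all_boot all_order all_algebra.
From mathcomp Require Import all_classical all_reals all_analysis.
Import Order.TTheory GRing.Theory Num.Theory numFieldNormedType.Exports.
Local Open Scope ring_scope.
Local Open Scope classical_set_scope.

Section isolated_points.
Context {X : topologicalType}.

Lemma isolatedT_nbhs1 (x : X) : isolated [set: X] x <-> nbhs x [set x].
Proof.
split=> [[_ [V xV]]|x1]; first by rewrite setIT => <-.
by split; [exact: in_setT | exists [set x]; rewrite ?setIT].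
Qed.

Lemma isolated_continuous (T : topologicalType) (f : X -> T) (x : X) :
  isolated [set: X] x -> {for x, continuous f}.
Proof.
move/isolatedT_nbhs1 => x1; apply: (near_cst_continuous (f x)).
by apply: filterS x1 => y ->.
Qed.

End isolated_points.

Section discontinuity_set.
Context {X : topologicalType} {R : realType}.
Implicit Types f : X -> R.

Lemma discont_eq0 f : discont f = set0 <-> continuous f.
Proof.
split=> [Df0 x|cf]; last by apply/seteqP; split=> x //= []; exact: cf.
by apply/not_notP => /= fx; have : discont f x by []; rewrite Df0.
Qed.

Lemma discont_isolated f : discont f `&` isolated [set: X] = set0.
Proof.
apply/seteqP; split=> x // [Dx].
by move/(@isolated_continuous _ _ (f : X -> R^o)).
Qed.

Lemma discont_indic1 (x : X) :
  accessible_space X -> discont (\1_[set x] : X -> R) `<=` [set x].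
Proof.
move=> T1 y Dy; apply/not_notP => /eqP yx; apply: Dy.
have [B [oB /set_mem By /set_mem nBx]] := T1 _ _ yx.
apply: (near_cst_continuous 0); near=> z.
rewrite indicE memNset //= => zx; apply: nBx; rewrite -zx.
by near: z; exact: open_nbhs_nbhs.
Unshelve. all: by end_near.
Qed.

Lemma continuous_indic1_isolated (x : X) :
  {for x, continuous (\1_[set x] : X -> R^o)} -> isolated [set: X] x.
Proof.
move=> cx; apply/isolatedT_nbhs1.
have /cx : nbhs (\1_[set x] x : R^o) [set r : R^o | r != 0].
  apply: open_nbhs_nbhs; split; first exact: open_neq.
  by rewrite /= indicE in_set1 eqxx oner_neq0.
move=> near1; apply: filterS (near1 : nbhs x _) => y /=.
by rewrite indicE in_set1; case: (y =P x) => //; rewrite eqxx.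
Qed.

End discontinuity_set.

Lemma closed_ideal_closure (X : topologicalType) (P : set (set X)) (A B : set X) :
  closed_ideal P -> P A -> B `<=` A -> P (closure B).
Proof.
move=> [_ Pcl _ PS] PA BA; apply: (PS A) => //; first exact: closed_closure.
by rewrite (closure_id A).1; [exact: closureS | exact: Pcl].
Qed.

Theorem theorem2p1 (R : realType) (X : topologicalType) (P : set (set X)) :
  accessible_space X -> closed_ideal P ->
  (@CP X R P = @CX X R <-> P `<=` @Pisol X).
Proof.
move=> T1 idealP; have [[A0 PA0] Pcl _ _] := idealP.
split=> [CPE A PA | PP'].
- split=> [|x Ax]; first exact: Pcl.
  have indic_cont : CX (\1_[set x] : X -> R).
    rewrite -CPE; apply: closed_ideal_closure idealP PA _.
    by apply: subset_trans (discont_indic1 _ T1) _ => y ->.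
  exact: continuous_indic1_isolated (indic_cont x).
- apply/seteqP; split=> f.
  + move=> /PP' [_ closure_isolated]; apply/discont_eq0.
    rewrite -(discont_isolated f) setIidl //.
    exact: subset_trans (@subset_closure _ _) closure_isolated.
  + move=> cf; apply: closed_ideal_closure idealP PA0 _.
    by rewrite (discont_eq0 f).2.
Qed.
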